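(* Let $\mathcal{R}$ be a non-closed linear manifold in a Hilbert space $\mathcal{H}$. Then the following are equivalent: (i) there exists an orthogonal projection $P$ in $\mathcal{H}$ such that $\operatorname{ran} P\cap\mathcal{R}=\{0\}$ and $\operatorname{ran}(I-P)\cap\mathcal{R}=\{0\}$; (ii) there exists a fundamental symmetry $J$ in $\mathcal{H}$ such that $J\mathcal{R}\cap\mathcal{R}=\{0\}$.
   Context: $\mathcal{H}$ is a complex, infinite-dimensional, separable Hilbert space. A linear manifold is a (not necessarily closed) linear subset. A fundamental symmetry is a bounded operator $J$ on $\mathcal{H}$ with $J=J^*=J^{-1}$ (equivalently $J=2P-I$ for an orthogonal projection $P$). *)

From Stdlib Require Import Reals.
Open Scope R_scope.

Record Cx := mkCx { cre : R; cim : R }.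
Definition C0 : Cx := mkCx 0 0.
Definition C1 : Cx := mkCx 1 0.
Definition Cadd (a b : Cx) : Cx := mkCx (cre a + cre b) (cim a + cim b).
Definition Cmul (a b : Cx) : Cx :=
  mkCx (cre a * cre b - cim a * cim b) (cre a * cim b + cim a * cre b).
Definition Cconj (a : Cx) : Cx := mkCx (cre a) (- cim a).

Record InnerProductSpace := {
  vec :> Type;
  vzero : vec;
  vadd : vec -> vec -> vec;
  vopp : vec -> vec;
  vscal : Cx -> vec -> vec;
  inner : vec -> vec -> Cx;
  vadd_assoc : forall x y z, vadd x (vadd y z) = vadd (vadd x y) z;
  vadd_comm : forall x y, vadd x y = vadd y x;
  vadd_0 : forall x, vadd x vzero = x;
  vadd_opp : forall x, vadd x (vopp x) = vzero;
  vscal_1 : forall x, vscal C1 x = x;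
  vscal_assoc : forall a b x, vscal a (vscal b x) = vscal (Cmul a b) x;
  vscal_distr_v : forall a x y, vscal a (vadd x y) = vadd (vscal a x) (vscal a y);
  vscal_distr_c : forall a b x, vscal (Cadd a b) x = vadd (vscal a x) (vscal b x);
  (* linear in the first argument, conjugate-linear in the second *)
  inner_add_l : forall x y z, inner (vadd x y) z = Cadd (inner x z) (inner y z);
  inner_scal_l : forall a x y, inner (vscal a x) y = Cmul a (inner x y);
  inner_conj_sym : forall x y, inner y x = Cconj (inner x y);
  inner_pos : forall x, 0 <= cre (inner x x);
  inner_def : forall x, inner x x = C0 -> x = vzero
}.

Arguments vzero {_}.
Arguments vadd {_} _ _.
Arguments vopp {_} _.
Arguments vscal {_} _ _.
Arguments inner {_} _ _.

Section IPS.
Context {V : InnerProductSpace}.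

Definition vsub (x y : V) : V := vadd x (vopp y).
Definition vnorm (x : V) : R := sqrt (cre (inner x x)).

Definition converges (u : nat -> V) (l : V) : Prop :=
  forall eps, 0 < eps -> exists N, forall n, (N <= n)%nat -> vnorm (vsub (u n) l) < eps.

Definition cauchy_seq (u : nat -> V) : Prop :=
  forall eps, 0 < eps -> exists N, forall m n, (N <= m)%nat -> (N <= n)%nat ->
    vnorm (vsub (u m) (u n)) < eps.

Fixpoint lin_comb (n : nat) (c : nat -> Cx) (v : nat -> V) : V :=
  match n with
  | O => vzero
  | S k => vadd (lin_comb k c v) (vscal (c k) (v k))
  end.

Definition lin_indep (n : nat) (v : nat -> V) : Prop :=
  forall c : nat -> Cx, lin_comb n c v = vzero -> forall i, (i < n)%nat -> c i = C0.
End IPS.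

Record HilbertSpace := {
  hs_ips :> InnerProductSpace;
  hs_complete : forall u : nat -> hs_ips, cauchy_seq u -> exists l, converges u l;
  hs_separable : exists d : nat -> hs_ips,
    forall x eps, 0 < eps -> exists n, vnorm (vsub x (d n)) < eps;
  hs_infinite_dim : forall n : nat, exists v : nat -> hs_ips, lin_indep n v
}.

Section Ops.
Context {V : InnerProductSpace}.

Definition is_linear (T : V -> V) : Prop :=
  (forall x y, T (vadd x y) = vadd (T x) (T y)) /\
  (forall a x, T (vscal a x) = vscal a (T x)).

Definition bounded_operator (T : V -> V) : Prop :=
  is_linear T /\ exists M : R, forall x, vnorm (T x) <= M * vnorm x.

Definition selfadjoint (T : V -> V) : Prop :=
  forall x y, inner (T x) y = inner x (T y).

Definition orth_projection (P : V -> V) : Prop :=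
  bounded_operator P /\ (forall x, P (P x) = P x) /\ selfadjoint P.

Definition fundamental_symmetry (J : V -> V) : Prop :=
  bounded_operator J /\ selfadjoint J /\ (forall x, J (J x) = x).

Definition linear_manifold (M : V -> Prop) : Prop :=
  M vzero /\ (forall x y, M x -> M y -> M (vadd x y)) /\
  (forall a x, M x -> M (vscal a x)).

Definition norm_closed (M : V -> Prop) : Prop :=
  forall (u : nat -> V) l, (forall n, M (u n)) -> converges u l -> M l.

Definition ran (T : V -> V) : V -> Prop := fun y => exists x, y = T x.

Definition img (T : V -> V) (M : V -> Prop) : V -> Prop :=
  fun y => exists x, M x /\ y = T x.

Definition trivial_inter (A B : V -> Prop) : Prop :=
  forall y, A y -> B y -> y = vzero.
End Ops.

(* The argument is purely algebraic.  Orthogonal projections and fundamental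
   symmetries correspond to each other via J = 2P - I and P = (I + J)/2, and
   under this correspondence ran P and ran (I - P) are the eigenspaces
   {y | J y = y} and {y | J y = -y} of J.  For any linear involution J and any
   linear manifold R, J R ∩ R = {0} holds exactly when R meets neither
   eigenspace nontrivially: if x and J x both lie in R, then x + J x and
   x - J x are eigenvectors lying in R, and J x is half their difference. *)

From Pilot Require Import Defs.
From Stdlib Require Import Reals Lra.
Open Scope R_scope.

Arguments vadd_assoc {_}.
Arguments vadd_comm {_}.
Arguments vadd_0 {_}.
Arguments vadd_opp {_}.
Arguments vscal_1 {_}.
Arguments vscal_assoc {_}.
Arguments vscal_distr_v {_}.
Arguments vscal_distr_c {_}.
Arguments inner_add_l {_}.
Arguments inner_scal_l {_}.
Arguments inner_conj_sym {_}.
Arguments inner_pos {_}.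

Lemma Cx_ext (a b : Cx) : cre a = cre b -> cim a = cim b -> a = b.
Proof. destruct a, b; simpl; intros; subst; reflexivity. Qed.

Definition Cm1 : Cx := mkCx (-1) 0.
Definition C2 : Cx := mkCx 2 0.
Definition Chalf : Cx := mkCx (1/2) 0.

Ltac cx := apply Cx_ext;
  unfold Cmul, Cadd, Cconj, Defs.C0, Defs.C1, Cm1, C2, Chalf; simpl; field.

Section Combinations.
Context {V : InnerProductSpace}.

Lemma vadd_0_l (x : V) : vadd vzero x = x.
Proof. rewrite vadd_comm; apply vadd_0. Qed.

Lemma vadd_swap4 (a b c d : V) :
  vadd (vadd a b) (vadd c d) = vadd (vadd a c) (vadd b d).
Proof.
  rewrite <- !vadd_assoc. f_equal.
  rewrite !vadd_assoc. f_equal. apply vadd_comm.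
Qed.

(* 0 x = 0, since w = 0 x satisfies w = w + w. *)
Lemma vscal_0 (x : V) : vscal Defs.C0 x = vzero.
Proof.
  set (w := vscal Defs.C0 x).
  assert (Hw : w = vadd w w).
  { unfold w. rewrite <- vscal_distr_c. f_equal. cx. }
  rewrite <- (vadd_opp w). rewrite Hw at 2.
  rewrite <- vadd_assoc, vadd_opp, vadd_0. reflexivity.
Qed.

Lemma vscal_0v (a : Cx) : vscal a (@vzero V) = vzero.
Proof.
  rewrite <- (vscal_0 vzero), vscal_assoc.
  replace (Cmul a Defs.C0) with Defs.C0 by cx. reflexivity.
Qed.

Lemma vscal_unit (a : Cx) (x : V) : a = Defs.C1 -> vscal a x = x.
Proof. intros ->. apply vscal_1. Qed.

Lemma vopp_scal (x : V) : vopp x = vscal Cm1 x.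
Proof.
  assert (E : vadd (vscal Cm1 x) x = vzero).
  { rewrite <- (vscal_1 x) at 2. rewrite <- vscal_distr_c.
    replace (Cadd Cm1 Defs.C1) with Defs.C0 by cx. apply vscal_0. }
  rewrite <- (vadd_0 (vscal Cm1 x)), <- (vadd_opp x), vadd_assoc, E.
  symmetry. apply vadd_0_l.
Qed.

(* The combination a x + b y; every vector identity below is an identity
   between such combinations and reduces to one between coefficients. *)
Definition comb (x y : V) (a b : Cx) : V := vadd (vscal a x) (vscal b y).

Lemma comb_eq (x y : V) a b c d : a = c -> b = d -> comb x y a b = comb x y c d.
Proof. intros -> ->; reflexivity. Qed.

Lemma comb_is_l (x y : V) a b : a = Defs.C1 -> b = Defs.C0 -> comb x y a b = x.
Proof. intros -> ->. unfold comb. rewrite vscal_1, vscal_0, vadd_0. reflexivity. Qed.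

Lemma comb_is_r (x y : V) a b : a = Defs.C0 -> b = Defs.C1 -> comb x y a b = y.
Proof. intros -> ->. unfold comb. rewrite vscal_1, vscal_0, vadd_0_l. reflexivity. Qed.

Lemma comb_swap (x y : V) a b : comb y x a b = comb x y b a.
Proof. unfold comb. apply vadd_comm. Qed.

Lemma comb_diag (y : V) a b : comb y y a b = vscal (Cadd a b) y.
Proof. unfold comb. rewrite vscal_distr_c. reflexivity. Qed.

Lemma comb_comb (x y : V) a b c d e f :
  comb (comb x y a b) (comb x y c d) e f =
  comb x y (Cadd (Cmul e a) (Cmul f c)) (Cadd (Cmul e b) (Cmul f d)).
Proof.
  unfold comb. rewrite !vscal_distr_v, !vscal_assoc, vadd_swap4, <- !vscal_distr_c.
  reflexivity.
Qed.

Lemma comb_in_l (x y : V) a b e f :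
  comb x (comb x y a b) e f = comb x y (Cadd e (Cmul f a)) (Cmul f b).
Proof.
  unfold comb. rewrite vscal_distr_v, !vscal_assoc, vadd_assoc, <- vscal_distr_c.
  reflexivity.
Qed.

Lemma comb_in_r (x y : V) a b e f :
  comb (comb x y a b) y e f = comb x y (Cmul e a) (Cadd (Cmul e b) f).
Proof.
  unfold comb. rewrite vscal_distr_v, !vscal_assoc, <- vadd_assoc, <- vscal_distr_c.
  reflexivity.
Qed.

Lemma vopp_comb (x y : V) a b : vopp (comb x y a b) = comb x y (Cmul Cm1 a) (Cmul Cm1 b).
Proof. rewrite vopp_scal. unfold comb. rewrite vscal_distr_v, !vscal_assoc. reflexivity. Qed.

Lemma vsub_comb_l (x y : V) a b :
  vsub x (comb x y a b) = comb x y (Cadd Defs.C1 (Cmul Cm1 a)) (Cmul Cm1 b).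
Proof.
  unfold vsub. rewrite vopp_comb. unfold comb.
  rewrite vadd_assoc, vscal_distr_c, vscal_1. reflexivity.
Qed.

Lemma comb_lin (T : V -> V) x y a b :
  is_linear T -> T (comb x y a b) = comb (T x) (T y) a b.
Proof. intros [Ha Hs]. unfold comb. rewrite Ha, !Hs. reflexivity. Qed.

Lemma manifold_comb (M : V -> Prop) x y a b :
  linear_manifold M -> M x -> M y -> M (comb x y a b).
Proof. intros [_ [Hadd Hsc]] Hx Hy. apply Hadd; apply Hsc; assumption. Qed.

Lemma manifold_opp (M : V -> Prop) x : linear_manifold M -> M x -> M (vopp x).
Proof. intros [_ [_ Hsc]] Hx. rewrite vopp_scal. apply Hsc, Hx. Qed.

Lemma trivial_inter_iff (A B M : V -> Prop) :
  (forall y, A y <-> B y) -> (trivial_inter A M <-> trivial_inter B M).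
Proof. intros E; split; intros T y Hy HM; apply T; auto; apply E, Hy. Qed.

End Combinations.

Section Operators.
Context {V : InnerProductSpace}.

Lemma comb_id_linear (T : V -> V) a b :
  is_linear T -> is_linear (fun x => comb x (T x) a b).
Proof.
  intros [Ta Ts]. split.
  - intros x y. unfold comb. rewrite Ta, !vscal_distr_v. apply vadd_swap4.
  - intros c x. unfold comb. rewrite Ts, vscal_distr_v, !vscal_assoc.
    f_equal; f_equal; destruct a, b, c; cx.
Qed.

Lemma comb_id_selfadjoint (T : V -> V) a b :
  cim a = 0 -> cim b = 0 -> selfadjoint T -> selfadjoint (fun x => comb x (T x) a b).
Proof.
  intros Ha Hb HT x y. unfold comb.
  rewrite inner_add_l, !inner_scal_l, HT.
  rewrite (inner_conj_sym (vadd _ _) x), inner_add_l, !inner_scal_l.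
  rewrite (inner_conj_sym x y), (inner_conj_sym x (T y)).
  destruct a, b, (inner y x), (inner (T y) x); simpl in *; subst. cx.
Qed.

Lemma inner_0_r (y : V) : inner y vzero = Defs.C0.
Proof.
  rewrite inner_conj_sym, <- (vscal_0 vzero), inner_scal_l. cx.
Qed.

Lemma inner_add_r (x y z : V) : inner x (vadd y z) = Cadd (inner x y) (inner x z).
Proof.
  rewrite inner_conj_sym, inner_add_l, (inner_conj_sym y x), (inner_conj_sym z x).
  destruct (inner x y), (inner x z). cx.
Qed.

(* A selfadjoint involution is an isometry, hence bounded. *)
Lemma involution_bounded (J : V -> V) :
  is_linear J -> selfadjoint J -> (forall x, J (J x) = x) -> bounded_operator J.
Proof.
  intros Hl Hs Hi. split; [exact Hl|]. exists 1. intro x.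
  assert (E : vnorm (J x) = vnorm x) by (unfold vnorm; rewrite Hs, Hi; reflexivity).
  rewrite E. lra.
Qed.

(* A selfadjoint idempotent is bounded: x = P x + (x - P x) is an orthogonal
   decomposition, so |P x| <= |x|. *)
Lemma projection_bounded (P : V -> V) :
  is_linear P -> selfadjoint P -> (forall x, P (P x) = P x) -> bounded_operator P.
Proof.
  intros Hl Hs Hi. split; [exact Hl|]. exists 1. intro x.
  rewrite Rmult_1_l. unfold vnorm. apply sqrt_le_1_alt.
  set (p := P x). set (q := vsub x p).
  assert (Ex : x = vadd p q).
  { unfold q, vsub. rewrite (vadd_comm x), vadd_assoc, vadd_opp, vadd_0_l. reflexivity. }
  assert (Pq : P q = vzero).
  { unfold q, vsub, p. destruct Hl as [Ha Hsc].
    rewrite Ha, vopp_scal, Hsc, Hi, <- vopp_scal. apply vadd_opp. }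
  assert (Hpq : inner p q = Defs.C0) by (unfold p at 1; rewrite Hs, Pq; apply inner_0_r).
  assert (Hqp : inner q p = Defs.C0) by (rewrite inner_conj_sym, Hpq; cx).
  rewrite Ex, inner_add_l, !inner_add_r, Hpq, Hqp. simpl.
  pose proof (inner_pos q). lra.
Qed.

Definition sym_of_proj (P : V -> V) (x : V) : V := comb x (P x) Cm1 C2.

Definition proj_of_sym (J : V -> V) (x : V) : V := comb x (J x) Chalf Chalf.

Lemma proj_of_sym_of_proj (P : V -> V) (x : V) :
  P x = proj_of_sym (sym_of_proj P) x.
Proof.
  unfold proj_of_sym, sym_of_proj. rewrite comb_in_l.
  symmetry. apply comb_is_r; cx.
Qed.

Lemma proj_sym_of_proj (P : V -> V) (x : V) :
  is_linear P -> (forall x, P (P x) = P x) -> P (sym_of_proj P x) = P x.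
Proof.
  intros Hl Hi. unfold sym_of_proj. rewrite comb_lin by exact Hl.
  rewrite Hi, comb_diag. apply vscal_unit; cx.
Qed.

Lemma sym_of_proj_fundamental (P : V -> V) :
  orth_projection P -> fundamental_symmetry (sym_of_proj P).
Proof.
  intros [[Hl _] [Hi Hs]].
  assert (Jl : is_linear (sym_of_proj P)) by (apply comb_id_linear, Hl).
  assert (Js : selfadjoint (sym_of_proj P))
    by (apply comb_id_selfadjoint; [reflexivity | reflexivity | exact Hs]).
  assert (Ji : forall x, sym_of_proj P (sym_of_proj P x) = x).
  { intro x. unfold sym_of_proj at 1. rewrite proj_sym_of_proj by assumption.
    unfold sym_of_proj. rewrite comb_in_r. apply comb_is_l; cx. }
  split; [apply involution_bounded | split]; assumption.
Qed.

Section Involution.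
Variable J : V -> V.
Hypothesis J_lin : is_linear J.
Hypothesis J_inv : forall x, J (J x) = x.

Definition fixed_space (y : V) : Prop := J y = y.
Definition antifixed_space (y : V) : Prop := J y = vopp y.

Lemma sym_comb (x : V) a b : J (comb x (J x) a b) = comb x (J x) b a.
Proof. rewrite comb_lin by exact J_lin. rewrite J_inv. apply comb_swap. Qed.

Lemma sym_fixes_proj (x : V) : J (proj_of_sym J x) = proj_of_sym J x.
Proof. unfold proj_of_sym. apply sym_comb. Qed.

Lemma involution_trivial_inter (M : V -> Prop) :
  linear_manifold M ->
  trivial_inter (img J M) M <->
  trivial_inter fixed_space M /\ trivial_inter antifixed_space M.
Proof.
  intros HM. split.
  - intros T. split.
    + intros y Hy My. apply T; [exists y; split; auto | exact My].
    + intros y Hy My. apply T; [|exact My]. exists (vopp y).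
      split; [apply manifold_opp; assumption|].
      rewrite vopp_scal, (proj2 J_lin), Hy, vopp_scal, vscal_assoc.
      symmetry. apply vscal_unit; cx.
  - intros [TF TA] y [x [Mx ->]] MJx.
    assert (Hplus : comb x (J x) Defs.C1 Defs.C1 = vzero).
    { apply TF; [apply sym_comb | apply manifold_comb; assumption]. }
    assert (Hminus : comb x (J x) Defs.C1 Cm1 = vzero).
    { apply TA; [|apply manifold_comb; assumption].
      unfold antifixed_space. rewrite sym_comb, vopp_comb. apply comb_eq; cx. }
    assert (Ehalf : J x = comb (comb x (J x) Defs.C1 Defs.C1) (comb x (J x) Defs.C1 Cm1)
                              Chalf (Cmul Cm1 Chalf)).
    { rewrite comb_comb. symmetry. apply comb_is_r; cx. }
    rewrite Ehalf, Hplus, Hminus, comb_diag. apply vscal_0v.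
Qed.

Section Projection.
Variable P : V -> V.
Hypothesis P_half : forall x, P x = proj_of_sym J x.

Lemma ran_proj_fixed (y : V) : ran P y <-> fixed_space y.
Proof.
  split.
  - intros [x ->]. unfold fixed_space. rewrite P_half. apply sym_fixes_proj.
  - intros Hy. exists y. rewrite P_half. unfold proj_of_sym.
    rewrite Hy, comb_diag. symmetry. apply vscal_unit; cx.
Qed.

Lemma ran_coproj_antifixed (y : V) : ran (fun x => vsub x (P x)) y <-> antifixed_space y.
Proof.
  split.
  - intros [x ->]. unfold antifixed_space. rewrite P_half. unfold proj_of_sym.
    rewrite vsub_comb_l, sym_comb, vopp_comb. apply comb_eq; cx.
  - intros Hy. exists y. rewrite P_half. unfold proj_of_sym.
    rewrite vsub_comb_l, Hy, vopp_scal. unfold comb.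
    rewrite vscal_assoc, <- vscal_distr_c. symmetry. apply vscal_unit; cx.
Qed.

Lemma proj_sym_trivial_inter (M : V -> Prop) :
  linear_manifold M ->
  (trivial_inter (ran P) M /\ trivial_inter (ran (fun x => vsub x (P x))) M) <->
  trivial_inter (img J M) M.
Proof.
  intros HM. rewrite involution_trivial_inter by exact HM.
  rewrite (trivial_inter_iff _ _ M ran_proj_fixed),
          (trivial_inter_iff _ _ M ran_coproj_antifixed).
  reflexivity.
Qed.

End Projection.
End Involution.

Lemma proj_of_sym_orth (J : V -> V) :
  fundamental_symmetry J -> orth_projection (proj_of_sym J).
Proof.
  intros [[Jl _] [Js Ji]].
  assert (Pl : is_linear (proj_of_sym J)) by (apply comb_id_linear, Jl).
  assert (Ps : selfadjoint (proj_of_sym J))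
    by (apply comb_id_selfadjoint; [reflexivity | reflexivity | exact Js]).
  assert (Pi : forall x, proj_of_sym J (proj_of_sym J x) = proj_of_sym J x).
  { intro x. unfold proj_of_sym at 1. rewrite sym_fixes_proj by assumption.
    rewrite comb_diag. apply vscal_unit; cx. }
  split; [apply projection_bounded | split]; assumption.
Qed.

End Operators.

Theorem proposition3p1 (H : HilbertSpace) (Rm : H -> Prop)
  (hR : linear_manifold Rm) (hnc : ~ norm_closed Rm) :
  (exists P : H -> H, orth_projection P /\
     trivial_inter (ran P) Rm /\
     trivial_inter (ran (fun x => vsub x (P x))) Rm)
  <->
  (exists J : H -> H, fundamental_symmetry J /\ trivial_inter (img J Rm) Rm).
Proof.
  split.
  - intros [P [HP HPR]].
    pose proof (sym_of_proj_fundamental P HP) as HJ.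
    exists (sym_of_proj P). split; [exact HJ|].
    destruct HJ as [[Jl _] [_ Ji]].
    apply (proj_sym_trivial_inter _ Jl Ji P (proj_of_sym_of_proj P) Rm hR), HPR.
  - intros [J [HJ HJR]].
    exists (proj_of_sym J). split; [apply proj_of_sym_orth, HJ|].
    destruct HJ as [[Jl _] [_ Ji]].
    apply (proj_sym_trivial_inter J Jl Ji (proj_of_sym J) (fun x => eq_refl) Rm hR), HJR.
Qed.
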